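(* Consider the two additive-noise structural causal models $$\mathcal{M}:\ X_1=U_1,\ X_2=X_1+U_2,\ Y=X_1X_2+U_Y, \qquad (U_1,U_2,U_Y)\sim\mathcal{N}(0,\Sigma),\ \Sigma=\begin{bmatrix}1&1&1\\1&1&1\\1&1&1\end{bmatrix},$$ $$\mathcal{M}':\ X_1=U_1,\ X_2=2X_1+U_2,\ Y=X_1X_2+U_Y, \qquad (U_1,U_2,U_Y)\sim\mathcal{N}(0,\Sigma'),\ \Sigma'=\begin{bmatrix}1&0&1\\0&0&0\\1&0&1\end{bmatrix}.$$ Then $\mathcal{M}$ and $\mathcal{M}'$ induce the same observational distribution of $(X_1,X_2,Y)$, the same joint interventional distributions under $\mathrm{do}(X_1=x_1,X_2=x_2)$, and the same interventional distributions under $\mathrm{do}(X_2=x_2)$, but they disagree on the causal effect of intervening on $X_1$ (e.g. on $\mathbb{E}[Y\mid\mathrm{do}(X_1=x_1)]$ for $x_1\neq 0$). Consequently, in additive noise models with zero-mean Gaussian noise and an unrestricted causal graph (in particular, with a causal edge between treatments), single-variable interventional effects are not in general identifiable from observational and joint interventional data.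
   Context: An additive noise model is a structural causal model in which each endogenous variable equals a function of its parents plus an exogenous noise term; here the noise vector is zero-mean multivariate Gaussian with arbitrary (possibly singular) covariance. An intervention $\mathrm{do}(X=x)$ replaces the structural equation of $X$ by the constant $x$. *)

From HB Require Import structures.
From mathcomp Require Import all_boot all_order all_algebra.
From mathcomp Require Import all_classical all_reals all_analysis.
Set Implicit Arguments. Unset Strict Implicit. Unset Printing Implicit Defensive.
Import Order.TTheory GRing.Theory Num.Theory.
Local Open Scope classical_set_scope.
Local Open Scope ring_scope.

Definition iU1 : 'I_3 := @Ordinal 3 0 isT.
Definition iU2 : 'I_3 := @Ordinal 3 1 isT.
Definition iUY : 'I_3 := @Ordinal 3 2 isT.

Definition gauss_law {R : realType} (v : R) : set R -> \bar R :=
  if v == 0 then (fun A => \d_(0 : R) A) else normal_prob 0 (Num.sqrt v).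

(* U : T -> 'rV_3 is a zero-mean Gaussian random vector with covariance
   matrix Sigma (possibly singular): each component is measurable and every
   linear combination t . U is N(0, t Sigma t^T) (Cramer-Wold definition). *)
Definition gaussian_vector {d} {T : measurableType d} {R : realType}
  (P : probability T R) (U : T -> 'rV[R]_3) (Sigma : 'M[R]_3) : Prop :=
  (forall i, measurable_fun setT (fun w => U w 0 i)) /\
  forall (t : 'rV[R]_3) (A : set R), measurable A ->
    P [set w | (U w *m t^T) 0 0 \in A] = gauss_law ((t *m Sigma *m t^T) 0 0) A.

(* Solution of the additive noise SCM
     X1 = U1,  X2 = f2 X1 + U2,  Y = fY X1 X2 + UY
   under the (possibly empty) intervention given by i1, i2 :
   [Some x] replaces the structural equation by the constant x. *)
Definition anm_sol {R : realType} (f2 : R -> R) (fY : R -> R -> R)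
  (i1 i2 : option R) (u : 'rV[R]_3) : (R * R * R)%type :=
  let x1 := if i1 is Some x then x else u 0 iU1 in
  let x2 := if i2 is Some x then x else f2 x1 + u 0 iU2 in
  (x1, x2, fY x1 x2 + u 0 iUY).

Definition anm_law {d} {T : measurableType d} {R : realType}
  (P : probability T R) (U : T -> 'rV[R]_3) (f2 : R -> R) (fY : R -> R -> R)
  (i1 i2 : option R) (A : set (R * R * R)) : \bar R :=
  P ((fun w => anm_sol f2 fY i1 i2 (U w)) @^-1` A).

Definition anm_EY {d} {T : measurableType d} {R : realType}
  (P : probability T R) (U : T -> 'rV[R]_3) (f2 : R -> R) (fY : R -> R -> R)
  (i1 i2 : option R) : \bar R :=
  'E_P[fun w => (anm_sol f2 fY i1 i2 (U w)).2].

Definition f2M {R : realType} (x : R) : R := x.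
Definition f2M' {R : realType} (x : R) : R := 2 * x.
Definition fYM {R : realType} (x1 x2 : R) : R := x1 * x2.

Definition SigmaM {R : realType} : 'M[R]_3 := const_mx 1.
Definition SigmaM' {R : realType} : 'M[R]_3 :=
  \matrix_(i, j) (if (i != iU2) && (j != iU2) then 1 else 0).

From HB Require Import structures.
From mathcomp Require Import all_boot all_order all_algebra.
From mathcomp Require Import all_classical all_reals all_analysis.
From mathcomp Require Import ring lra measurable_realfun normal_distribution.
Import Order.TTheory GRing.Theory Num.Theory.
Local Open Scope classical_set_scope.
Local Open Scope ring_scope.

(* Both noise covariances have rank one, [SigmaM = v^T v] with [v = (1, 1, 1)]
   and [SigmaM' = v^T v] with [v = (1, 0, 1)]; hence almost surely
   [U = U1 * (1, beta, 1)] with [U1 ~ N(0, 1)], for [beta = 1] resp. [beta = 0],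
   and [f2 x = (2 - beta) x] in both models.  In such a model [X2 = 2 U1]
   whatever [beta] is, intervening on [X2] removes [f2] and [U2], the only
   places where [beta] enters, and everything is a function of [U1], so all
   these laws agree.
   Under [do(X1 = x1)], however, [Y = (2 - beta) x1^2 + (beta x1 + 1) U1],
   whose mean [(2 - beta) x1^2] does depend on [beta]. *)

Definition row3 {R : pzRingType} (a b c : R) : 'rV[R]_3 :=
  \row_(j < 3) (if j == iU1 then a else if j == iU2 then b else c).

Definition quad_form {R : pzRingType} {n} (S : 'M[R]_n) (t : 'rV[R]_n) : R :=
  (t *m S *m t^T) 0 0.

Lemma row3E {R : pzRingType} (a b c : R) :
  [/\ row3 a b c 0 iU1 = a, row3 a b c 0 iU2 = b & row3 a b c 0 iUY = c].
Proof. by rewrite !mxE. Qed.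

Lemma mul_row3_tr {R : comPzRingType} (u : 'rV[R]_3) a b c :
  (u *m (row3 a b c)^T) 0 0 = u 0 iU1 * a + u 0 iU2 * b + u 0 iUY * c.
Proof.
rewrite mxE !big_ord_recr big_ord0 /= !mxE /= add0r.
by congr (_ * _ + _ * _ + _ * _); congr (u 0 _); apply/val_inj.
Qed.

Lemma quad_form_rank1 {R : comPzRingType} {n} (v t : 'rV[R]_n) :
  quad_form (v^T *m v) t = ((t *m v^T) 0 0) ^+ 2.
Proof.
rewrite /quad_form !mulmxA {1}[t *m v^T]mx11_scalar mul_scalar_mx -scalemxAl.
have -> : v *m t^T = (t *m v^T)^T by rewrite trmx_mul trmxK.
by rewrite [LHS]mxE [(_^T) 0 0]mxE expr2.
Qed.

Lemma SigmaM_rank1 (R : realType) :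
  SigmaM = (row3 1 1 1)^T *m row3 (1 : R) 1 1.
Proof. by apply/matrixP => i j; rewrite !mxE big_ord1 !mxE !if_same mulr1. Qed.

Lemma SigmaM'_rank1 (R : realType) :
  SigmaM' = (row3 1 0 1)^T *m row3 (1 : R) 0 1.
Proof.
apply/matrixP => i j; rewrite !mxE big_ord1 !mxE.
by case: i j => [[|[|[|?]]] ?] [[|[|[|?]]] ?]; rewrite /= ?mulr1 ?mulr0 ?mul0r.
Qed.

Lemma gauss_law0 (R : realType) : gauss_law (0 : R) = \d_(0 : R).
Proof. by rewrite /gauss_law eqxx. Qed.

Lemma gauss_law1 (R : realType) : gauss_law (1 : R) = normal_prob 0 1.
Proof. by rewrite /gauss_law oner_eq0 sqrtr1. Qed.

Lemma measurable_preimage {d d'} {T : measurableType d} {X : measurableType d'}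
    {f : T -> X} {A : set X} :
  measurable_fun setT f -> measurable A -> measurable (f @^-1` A).
Proof. by move=> mf mA; rewrite -[_ @^-1` _]setTI; exact: mf. Qed.

Lemma measure_preimage_ae_eq {d dX}
    {T : measurableType d} {X : measurableType dX}
    {R : realType} {P : {measure set T -> \bar R}} {f g : T -> X} {A : set X} :
  measurable_fun setT f -> measurable_fun setT g -> measurable A ->
  {ae P, forall w, f w = g w} -> P (f @^-1` A) = P (g @^-1` A).
Proof.
move=> mf mg mA [N [mN PN fgN]].
rewrite -(measureU0 (measurable_preimage mf mA) mN PN).
rewrite -(measureU0 (measurable_preimage mg mA) mN PN).
congr (P _); apply/seteqP; split=> w /= [Aw|Nw]; try by right.
all: have [fgw|nfgw] := pselect (f w = g w); last by right; exact: fgN.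
- by left; rewrite -fgw.
- by left; rewrite fgw.
Qed.

Section gaussian_vector_combinations.
Context {d} {T : measurableType d} {R : realType} {P : probability T R}.
Context {U : T -> 'rV[R]_3} {Sigma : 'M[R]_3}.
Hypothesis hU : gaussian_vector P U Sigma.

Lemma measurable_comb (t : 'rV[R]_3) :
  measurable_fun setT (fun w => (U w *m t^T) 0 0).
Proof.
under eq_fun do rewrite mxE.
by apply: measurable_sum => j; apply: measurable_funM => //; exact: hU.1.
Qed.

Lemma comb_law (t : 'rV[R]_3) (B : set R) : measurable B ->
  P ((fun w => (U w *m t^T) 0 0) @^-1` B) = gauss_law (quad_form Sigma t) B.
Proof.
move=> mB; rewrite -(hU.2 t B mB); congr (P _).
by apply/funext => w; rewrite /= in_setE.
Qed.

Lemma comb_ae0 (t : 'rV[R]_3) : quad_form Sigma t = 0 ->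
  {ae P, forall w, (U w *m t^T) 0 0 = 0}.
Proof.
have mN0 : measurable [set~ (0 : R)].
  by apply: measurableC; exact: measurable_set1.
move=> q0; exists ((fun w => (U w *m t^T) 0 0) @^-1` [set~ 0]); split => //.
- exact: measurable_preimage (measurable_comb t) mN0.
- by rewrite comb_law // q0 gauss_law0 diracE memNset /=.
Qed.

End gaussian_vector_combinations.

Section standard_normal_moments.
Context (R : realType).

(* Since [|x| <= exp (x^2 / 4)], an instance of [1 + y <= exp y]. *)
Lemma abs_normal_pdf_le (x : R) :
  `|x| * normal_pdf 0 1 x <=
  normal_peak 1 / normal_peak (Num.sqrt 2) * normal_pdf 0 (Num.sqrt 2) x.
Proof.
have sqrt2_neq0 : Num.sqrt 2 != 0 :> R by rewrite gt_eqF // sqrtr_gt0; lra.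
have peak2_gt0 : 0 < normal_peak (Num.sqrt 2 : R) by exact: normal_peak_gt0.
rewrite !normal_pdfE ?oner_eq0 // /= mulrA divfK ?gt_eqF // mulrCA.
rewrite ler_wpM2l ?normal_peak_ge0 // /normal_fun !subr0 expr1n.
rewrite sqr_sqrtr ?ler0n //.
have abs_le_expR : `|x| <= expR (x ^+ 2 / 4).
  apply: le_trans (expR_ge1Dx _).
  have := sqr_ge0 (`|x| - 2); rewrite -[x ^+ 2]real_normK ?num_real // sqrrB.
  rewrite -mulr_natr expr2; lra.
apply: le_trans (ler_wpM2r (expR_ge0 _) abs_le_expR) _.
by rewrite -expRD ler_expR -mulr_natr; lra.
Qed.

Lemma ge0_integral_normal_prob (m s : R) (f : R -> \bar R) :
  measurable_fun setT f -> (forall x, 0 <= f x)%E ->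
  (\int[normal_prob m s]_x f x
   = \int[lebesgue_measure]_x (f x * (normal_pdf m s x)%:E))%E.
Proof.
move=> mf f0; have dom := normal_prob_dominates m s.
rewrite -(Radon_Nikodym_SigmaFinite.change_of_variables dom) //.
have mg := measurable_int _ (Radon_Nikodym_SigmaFinite.f_integrable dom).
have mpdf : measurable_fun setT (fun x => (normal_pdf m s x)%:E).
  by apply/measurable_EFinP; exact: measurable_normal_pdf.
apply: ae_eq_integral => //; try exact: emeasurable_funM.
apply: ae_eqe_mul2l; apply: integral_ae_eq => //.
- exact: Radon_Nikodym_SigmaFinite.f_integrable.
- by move=> E _ mE; rewrite -(Radon_Nikodym_SigmaFinite.f_integral dom mE).
Qed.

Lemma normal_prob_abs_lty : (\int[normal_prob (0 : R) 1]_x `|x|%:E < +oo)%E.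
Proof.
have mabs : measurable_fun setT (fun x : R => `|x|%:E).
  by apply/measurable_EFinP; exact: normr_measurable.
have mpdf2 : measurable_fun setT
    (fun x : R => (normal_pdf 0 (Num.sqrt 2) x)%:E).
  by apply/measurable_EFinP; exact: measurable_normal_pdf.
rewrite ge0_integral_normal_prob //.
pose c := normal_peak 1 / normal_peak (Num.sqrt 2) : R.
apply: (@le_lt_trans _ _ (\int[lebesgue_measure]_x
   (c%:E * (normal_pdf (0 : R) (Num.sqrt 2) x)%:E))%E).
  apply: ge0_le_integral => //.
  - by move=> x _; rewrite -EFinM lee_fin mulr_ge0 ?normal_pdf_ge0.
  - apply: emeasurable_funM => //.
    by apply/measurable_EFinP; exact: measurable_normal_pdf.
  - exact: emeasurable_funM.
  - by move=> x _; rewrite -EFinM lee_fin abs_normal_pdf_le.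
rewrite ge0_integralZl //; last by rewrite lee_fin divr_ge0 ?normal_peak_ge0.
- by rewrite integral_normal_pdf mule1 ltry.
- by move=> x _; rewrite lee_fin normal_pdf_ge0.
Qed.

End standard_normal_moments.

Section real_random_variables.
Context {d} {T : measurableType d} {R : realType} {P : probability T R}.
Context {Z : T -> R}.
Hypothesis mZ : measurable_fun setT Z.

Lemma integrable_std_normal_law :
  (forall B, measurable B -> P (Z @^-1` B) = normal_prob 0 1 B) ->
  P.-integrable setT (EFin \o Z).
Proof.
move=> lawZ; apply/integrableP; split; first exact/measurable_EFinP.
have mZR : measurable_fun setT (Z : T -> measurableTypeR R) by exact: mZ.
have mabs : measurable_fun setT (fun x : R => `|x|%:E).
  by apply/measurable_EFinP; exact: normr_measurable.
rewrite -(ge0_integral_pushforward mZR _ measurableT mabs) //.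
rewrite (eq_measure_integral (normal_prob 0 1)) ?normal_prob_abs_lty //.
by move=> A mA _; exact: lawZ.
Qed.

Lemma integral_symmetric0 : P.-integrable setT (EFin \o Z) ->
  (forall B, measurable B -> P ((fun w => - Z w) @^-1` B) = P (Z @^-1` B)) ->
  (\int[P]_w (Z w)%:E = 0)%E.
Proof.
move=> iZ symZ.
have mNZ : measurable_fun setT (fun w => - Z w) by exact: measurable_funN.
have iNZ : P.-integrable setT (EFin \o (fun w => - Z w)).
  by have := integrableN iZ; apply: eq_integrable => // w _.
have mEFin : measurable_fun (setT : set R) EFin by exact: EFin_measurable.
have intNZ : (\int[P]_w (- Z w)%:E = - \int[P]_w (Z w)%:E)%E.
  rewrite -mulN1e -(integralZl measurableT iZ).
  by apply: eq_integral => w _; rewrite /= -EFinM mulN1r.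
have : (\int[P]_w (- Z w)%:E = \int[P]_w (Z w)%:E)%E.
  rewrite -(integral_pushforward mNZ mEFin iNZ measurableT).
  rewrite -(integral_pushforward mZ mEFin iZ measurableT).
  by apply: eq_measure_integral => A mA _; exact: symZ.
rewrite intNZ; have := integrable_fin_num _ iZ.
case: (\int[P]_w (Z w)%:E)%E => // r _ /eqP.
by rewrite eqe => /eqP rNr; congr (_%:E); lra.
Qed.

Lemma integral_ae_affine (Y : T -> R) (c k : R) :
  measurable_fun setT Y -> P.-integrable setT (EFin \o Z) ->
  (\int[P]_w (Z w)%:E = 0)%E -> {ae P, forall w, Y w = c + k * Z w} ->
  (\int[P]_w (Y w)%:E = c%:E)%E.
Proof.
move=> mY iZ Z0 YcZ.
rewrite (ae_eq_integral (fun w => (c + k * Z w)%:E)) //.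
- under eq_integral do rewrite EFinD EFinM.
  rewrite integralD //;
    [|exact: finite_measure_integrable_cst|exact: integrableZl].
  rewrite integralZl // Z0 mule0 adde0 integral_cst //.
  by rewrite -[RHS]mule1; congr (_ * _)%E; exact: probability_setT.
- exact/measurable_EFinP.
- apply/measurable_EFinP; apply: measurable_funD => //.
  exact: measurable_funM.
- by apply: filterS YcZ => w ->.
Qed.

End real_random_variables.

Lemma measurable_anm_sol d (T : measurableType d) (R : realType)
    (U : T -> 'rV[R]_3) (f2 : R -> R) (fY : R -> R -> R) (i1 i2 : option R) :
  (forall i, measurable_fun setT (fun w => U w 0 i)) ->
  measurable_fun setT f2 -> measurable_fun setT (fun x : R * R => fY x.1 x.2) ->
  measurable_fun setT (fun w => anm_sol f2 fY i1 i2 (U w)).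
Proof.
move=> mU mf2 mfY.
have mx1 : measurable_fun setT (fun w => if i1 is Some x then x else U w 0 iU1).
  by case: i1.
have mx2 : measurable_fun setT (fun w =>
    if i2 is Some x then x
    else f2 (if i1 is Some x then x else U w 0 iU1) + U w 0 iU2).
  case: i2 => // _; apply: measurable_funD => //.
  exact: measurableT_comp mf2 mx1.
have mx12 := measurable_fun_pair mx1 mx2.
apply: (measurable_fun_pair mx12); apply: measurable_funD => //.
exact: (measurableT_comp mfY mx12).
Qed.

Section rank_one_noise.
Context {d} {T : measurableType d} {R : realType} {P : probability T R}.
Context {U : T -> 'rV[R]_3} {beta : R}.
Local Notation Sigma := ((row3 1 beta 1)^T *m row3 1 beta 1).
Hypothesis hU : gaussian_vector P U Sigma.

Let Z w := U w 0 iU1.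

Let mZ : measurable_fun setT Z. Proof. exact: hU.1. Qed.

Let quad_form_row3 (a b c : R) :
  quad_form Sigma (row3 a b c) = (a + b * beta + c) ^+ 2.
Proof.
rewrite quad_form_rank1 mul_row3_tr.
by have [-> -> ->] := row3E a b c; rewrite !mulr1.
Qed.

Lemma rank_one_noise_law1 (B : set R) : measurable B ->
  P (Z @^-1` B) = normal_prob 0 1 B.
Proof.
move=> mB; have := comb_law hU (row3 1 0 0) B mB.
rewrite quad_form_row3 mul0r !addr0 expr1n gauss_law1 => <-.
by congr (P _); apply/funext => w; rewrite /= mul_row3_tr !mulr0 !addr0 mulr1.
Qed.

Lemma rank_one_noise_lawN1 (B : set R) : measurable B ->
  P ((fun w => - Z w) @^-1` B) = normal_prob 0 1 B.
Proof.
move=> mB; have := comb_law hU (row3 (-1) 0 0) B mB.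
rewrite quad_form_row3 mul0r !addr0 sqrrN expr1n gauss_law1 => <-.
by congr (P _); apply/funext => w; rewrite /= mul_row3_tr !mulr0 !addr0 mulrN1.
Qed.

Lemma rank_one_noise_ae :
  {ae P, forall w, U w 0 iU2 = beta * Z w /\ U w 0 iUY = Z w}.
Proof.
have q2 : quad_form Sigma (row3 beta (-1) 0) = 0.
  by rewrite quad_form_row3 mulN1r addrN add0r expr0n.
have qY : quad_form Sigma (row3 1 0 (-1)) = 0.
  by rewrite quad_form_row3 mul0r addr0 addrN expr0n.
apply: filterS2 (comb_ae0 hU _ q2) (comb_ae0 hU _ qY) => w.
by rewrite !mul_row3_tr /Z => e2 eY; split; lra.
Qed.

Context {f2 : R -> R}.
Hypothesis f2E : forall x, f2 x = (2 - beta) * x.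

Let mf2 : measurable_fun setT f2.
Proof. by rewrite (funext f2E); exact: measurable_funM. Qed.

Let mfYM : measurable_fun setT (fun x : R * R => fYM x.1 x.2).
Proof. exact: measurable_funM. Qed.

Let mY i1 i2 : measurable_fun setT (fun w => anm_sol f2 fYM i1 i2 (U w)).
Proof. exact: measurable_anm_sol hU.1 mf2 mfYM. Qed.

Let anm_law_ae i1 i2 (h : R -> R * R * R) (A : set (R * R * R)) :
  measurable_fun setT h -> measurable A ->
  {ae P, forall w, anm_sol f2 fYM i1 i2 (U w) = h (Z w)} ->
  anm_law P U f2 fYM i1 i2 A = normal_prob 0 1 (h @^-1` A).
Proof.
move=> mh mA solE.
rewrite /anm_law (measure_preimage_ae_eq (mY _ _) _ mA solE).
- exact: rank_one_noise_law1 (measurable_preimage mh mA).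
- exact: measurableT_comp mh mZ.
Qed.

Lemma anm_law_obs (A : set (R * R * R)) : measurable A ->
  anm_law P U f2 fYM None None A
  = normal_prob 0 1 ((fun z => (z, 2 * z, z * (2 * z) + z)) @^-1` A).
Proof.
move=> mA; apply: anm_law_ae => //.
  apply: measurable_fun_pair; [exact: measurable_fun_pair|].
  by apply: measurable_funD => //; exact: measurable_funM.
apply: filterS rank_one_noise_ae => w [e2 eY].
rewrite /anm_sol /fYM f2E e2 eY /Z; congr (_, _, _); ring.
Qed.

Lemma anm_law_do12 (x1 x2 : R) (A : set (R * R * R)) : measurable A ->
  anm_law P U f2 fYM (Some x1) (Some x2) A
  = normal_prob 0 1 ((fun z => (x1, x2, x1 * x2 + z)) @^-1` A).
Proof.
move=> mA; apply: anm_law_ae => //.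
  by apply: measurable_fun_pair => //; exact: measurable_funD.
by apply: filterS rank_one_noise_ae => w [_ eY]; rewrite /anm_sol eY.
Qed.

Lemma anm_law_do2 (x2 : R) (A : set (R * R * R)) : measurable A ->
  anm_law P U f2 fYM None (Some x2) A
  = normal_prob 0 1 ((fun z => (z, x2, z * x2 + z)) @^-1` A).
Proof.
move=> mA; apply: anm_law_ae => //.
  apply: measurable_fun_pair => //.
  by apply: measurable_funD => //; exact: measurable_funM.
by apply: filterS rank_one_noise_ae => w [_ eY]; rewrite /anm_sol eY.
Qed.

Lemma anm_EY_do1 (x1 : R) :
  anm_EY P U f2 fYM (Some x1) None = ((2 - beta) * x1 ^+ 2)%:E.
Proof.
have iZ : P.-integrable setT (EFin \o Z).
  exact: integrable_std_normal_law mZ rank_one_noise_law1.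
have Z0 : (\int[P]_w (Z w)%:E = 0)%E.
  apply: integral_symmetric0 iZ _ => // B mB.
  by rewrite rank_one_noise_law1 // rank_one_noise_lawN1.
rewrite /anm_EY unlock.
apply: (integral_ae_affine mZ _ _ (beta * x1 + 1)) => //.
  exact: measurableT_comp measurable_snd (mY _ _).
apply: filterS rank_one_noise_ae => w [e2 eY].
by rewrite /anm_sol /fYM f2E e2 eY /Z /=; ring.
Qed.

End rank_one_noise.

Theorem mainTheorem4 (R : realType)
  (d : measure_display) (T : measurableType d) (P : probability T R)
  (U : T -> 'rV[R]_3)
  (d' : measure_display) (T' : measurableType d') (P' : probability T' R)
  (U' : T' -> 'rV[R]_3) :
  gaussian_vector P U SigmaM ->
  gaussian_vector P' U' SigmaM' ->
  (* same observational distribution *)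
  (forall A : set (R * R * R), measurable A ->
     anm_law P U f2M fYM None None A = anm_law P' U' f2M' fYM None None A) /\
  (* same joint interventional distributions under do(X1 = x1, X2 = x2) *)
  (forall (x1 x2 : R) (A : set (R * R * R)), measurable A ->
     anm_law P U f2M fYM (Some x1) (Some x2) A
     = anm_law P' U' f2M' fYM (Some x1) (Some x2) A) /\
  (* same interventional distributions under do(X2 = x2) *)
  (forall (x2 : R) (A : set (R * R * R)), measurable A ->
     anm_law P U f2M fYM None (Some x2) A
     = anm_law P' U' f2M' fYM None (Some x2) A) /\
  (* different causal effect of intervening on X1 *)
  (forall x1 : R, x1 != 0 ->
     anm_EY P U f2M fYM (Some x1) None <> anm_EY P' U' f2M' fYM (Some x1) None).
Proof.
rewrite SigmaM_rank1 SigmaM'_rank1 => hU hU'.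
have f2ME x : f2M x = (2 - 1) * x :> R by rewrite /f2M; ring.
have f2M'E x : f2M' x = (2 - 0) * x :> R by rewrite subr0.
split; [|split; [|split]].
- by move=> A mA; rewrite (anm_law_obs hU f2ME) // (anm_law_obs hU' f2M'E).
- move=> x1 x2 A mA.
  by rewrite (anm_law_do12 hU f2ME) // (anm_law_do12 hU' f2M'E).
- by move=> x2 A mA; rewrite (anm_law_do2 hU f2ME) // (anm_law_do2 hU' f2M'E).
move=> x1 x1_neq0; rewrite (anm_EY_do1 hU f2ME) (anm_EY_do1 hU' f2M'E).
move=> [EY_eq]; have /eqP : x1 ^+ 2 = 0 by lra.
by rewrite sqrf_eq0 (negbTE x1_neq0).
Qed.
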